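(* Let $\mathcal{K}$ be a Hilbert space of dimension $D$ with a fixed orthonormal basis $\{|j\rangle\}_{j=1}^D$, let $\epsilon>0$, and let $U_1,\ldots,U_K$ be unitaries on $\mathcal{K}$ with $K \leq (10/\epsilon)^2 D\log(20D/\epsilon)$ such that $\frac{1-\epsilon}{D}\mathbb{1}\leq\frac{1}{K}\sum_{k}U_k\varphi U_k^*\leq\frac{1+\epsilon}{D}\mathbb{1}$ for every state $\varphi$ on $\mathcal{K}$. Consider the following protocol: Sender and Receiver share $|\Phi_D\rangle=\frac{1}{\sqrt D}\sum_{j=1}^D|j\rangle|j\rangle$; the Sender, given a description of a pure state $\psi=|\psi\rangle\langle\psi|$ on $\mathcal{K}$, measures on her half of $\Phi_D$ the POVM $$A_k=\frac{D}{K(1+\epsilon)}U_k\overline{\psi}U_k^*\ (k=1,\ldots,K),\qquad A_{\rm failure}=\mathbb{1}-\sum_{k=1}^K A_k,$$ and announces the outcome (''failure'' or $k$); if the outcome is $k$, the Receiver applies $U_k^\top$ to his half of $\Phi_D$. Then for every pure state $|\psi\rangle\in\mathcal{K}$ this protocol realises remote state preparation exactly with probability of failure exactly $\frac{\epsilon}{1+\epsilon}\leq\epsilon$ (i.e. whenever the outcome is not ''failure'', the Receiver's state is exactly $\psi$). In particular, probabilistic exact remote state preparation of arbitrary pure states on $\mathcal{K}$ with error $\epsilon$ is possible using $$\log D+2\log\frac{10}{\epsilon}+\log\log\frac{20D}{\epsilon}\ \text{cbits}\quad\text{and}\quad \log D\ \text{ebits}.$$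
   Context: $\overline{\cdot}$ denotes complex conjugation and ${}^\top$ the transpose, both with respect to the basis $\{|j\rangle\}$; $\log$ is to base 2. A remote state preparation (r.s.p.) protocol: a Sender is given a classical description of a state from a set $\mathcal{X}$ of states on $\mathcal{K}$, and together with a Receiver uses resources (here: a shared maximally entangled state and forward classical communication) to produce a state $\widetilde\rho$ held by the Receiver. It is probabilistic exact with error $\epsilon$ if it additionally produces a flag, known to both parties, indicating ''success'' or ''failure'', such that for every input state $\rho\in\mathcal X$ the failure probability is at most $\epsilon$ and $\widetilde\rho=\rho$ whenever the flag is ''success''. Using $\log D$ ebits means using a maximally entangled state of Schmidt rank $D$; using $c$ cbits means the forward classical message takes at most $2^c$ values. *)

From HB Require Import structures.
From mathcomp Require Import all_boot all_order all_algebra.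
From mathcomp Require Import complex mxtens.
From mathcomp Require Import reals exp.
Set Implicit Arguments.
Unset Strict Implicit.
Unset Printing Implicit Defensive.
Import Order.TTheory GRing.Theory Num.Theory.
Local Open Scope ring_scope.
Local Open Scope complex_scope.

Section QDefs.
Variable R : realType.
Local Notation C := R[i].

Definition log2 (x : R) : R := ln x / ln 2.

Definition adjmx {m n} (A : 'M[C]_(m, n)) : 'M[C]_(n, m) := (map_mx Num.conj A)^T.
Definition cconjmx {m n} (A : 'M[C]_(m, n)) : 'M[C]_(m, n) := map_mx Num.conj A.

Definition psd {n} (A : 'M[C]_n) : Prop :=
  forall v : 'cV[C]_n, 0 <= (adjmx v *m A *m v) 0 0.
Definition loewner {n} (A B : 'M[C]_n) : Prop := psd (B - A).

Definition is_state {n} (rho : 'M[C]_n) : Prop := psd rho /\ \tr rho = 1.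

Definition unitary {n} (U : 'M[C]_n) : Prop :=
  adjmx U *m U = 1%:M /\ U *m adjmx U = 1%:M.

Definition unit_vector {n} (v : 'cV[C]_n) : Prop := (adjmx v *m v) 0 0 = 1.

Definition proj {n} (v : 'cV[C]_n) : 'M[C]_n := v *m adjmx v.

Definition ket {n} (j : 'I_n) : 'cV[C]_n := delta_mx j 0.

(* |Phi_D> = D^{-1/2} sum_j |j>|j> ; first factor = Sender, second = Receiver *)
Definition max_ent (D : nat) : 'cV[C]_(D * D) :=
  (sqrtC (D%:R : C))^-1 *: \sum_(j < D) (ket j *t ket j).

Definition ptrace1 {m n} (M : 'M[C]_(m * n)) : 'M[C]_n :=
  \matrix_(i, j) \sum_(a < m) M (mxtens_index (a, i)) (mxtens_index (a, j)).

(* Sender measures POVM element A on her factor of the joint state rho: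
   probability of the outcome, and the Receiver's (unnormalised) conditional state
   Tr_1[(sqrt A (x) 1) rho (sqrt A (x) 1)] = Tr_1[(A (x) 1) rho]. *)
Definition outcome_prob {m n} (A : 'M[C]_m) (rho : 'M[C]_(m * n)) : C :=
  \tr ((A *t (1%:M : 'M[C]_n)) *m rho).
Definition receiver_state {m n} (A : 'M[C]_m) (rho : 'M[C]_(m * n)) : 'M[C]_n :=
  ptrace1 ((A *t (1%:M : 'M[C]_n)) *m rho).

Definition povm_elt (D K : nat) (eps : R) (U : 'I_K -> 'M[C]_D) (psi : 'cV[C]_D)
    (k : 'I_K) : 'M[C]_D :=
  ((D%:R / (K%:R * (1 + eps))) %:C) *: (U k *m cconjmx (proj psi) *m adjmx (U k)).
Definition povm_fail (D K : nat) (eps : R) (U : 'I_K -> 'M[C]_D) (psi : 'cV[C]_D)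
    : 'M[C]_D :=
  1%:M - \sum_(k < K) povm_elt eps U psi k.

Definition rsp_output (D K : nat) (eps : R) (U : 'I_K -> 'M[C]_D) (psi : 'cV[C]_D)
    (k : 'I_K) : 'M[C]_D :=
  (U k)^T *m receiver_state (povm_elt eps U psi k) (proj (max_ent D)) *m adjmx ((U k)^T).

End QDefs.
Arguments max_ent {R} D.
Arguments log2 {R} x.

From HB Require Import structures.
From mathcomp Require Import all_boot all_order all_algebra.
From mathcomp Require Import complex mxtens.
From mathcomp Require Import reals exp.
From mathcomp Require Import ring lra.
Set Implicit Arguments.
Unset Strict Implicit.
Unset Printing Implicit Defensive.
Import Order.TTheory GRing.Theory Num.Theory.
Local Open Scope ring_scope.
Local Open Scope complex_scope.

(** Measuring [A] on the Sender's half of [Phi_D] leaves the Receiver with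
    [A^T / D] ("transpose trick").  For [A_k] proportional to
    [U_k conj(psi) U_k^*] this is proportional to [conj(U_k) psi U_k^T],
    which [U_k^T] rotates back to [psi] exactly, since [U_k^T conj(U_k) = 1].
    The failure operator is a positive multiple of
    [(1 + eps)/D - 1/K sum_k U_k conj(psi) U_k^*], which is positive by the
    upper mixing bound applied to the state [conj(psi)]; its trace
    [D - D/(1 + eps)], divided by [D], is the failure probability.
    The cbit count is the logarithm of the bound on [K]. *)

Section Adjoint.
Variable R : realType.
Local Notation C := R[i].

Lemma adjmxM m n p (A : 'M[C]_(m, n)) (B : 'M[C]_(n, p)) :
  adjmx (A *m B) = adjmx B *m adjmx A.
Proof. by rewrite /adjmx map_mxM trmx_mul. Qed.

Lemma adjmxK m n (A : 'M[C]_(m, n)) : adjmx (adjmx A) = A.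
Proof. by apply/matrixP=> i j; rewrite !mxE conjCK. Qed.

Lemma adjmxZ m n (a : C) (A : 'M[C]_(m, n)) :
  adjmx (a *: A) = Num.conj a *: adjmx A.
Proof. by apply/matrixP=> i j; rewrite !mxE rmorphM. Qed.

Lemma adjmx_sum m n I (r : seq I) (F : I -> 'M[C]_(m, n)) :
  adjmx (\sum_(i <- r) F i) = \sum_(i <- r) adjmx (F i).
Proof.
apply/matrixP=> i j; rewrite !mxE summxE rmorph_sum summxE.
by apply: eq_bigr=> k _; rewrite !mxE.
Qed.

Lemma adjmx_tens m n p q (A : 'M[C]_(m, n)) (B : 'M[C]_(p, q)) :
  adjmx (A *t B) = adjmx A *t adjmx B.
Proof. by rewrite /adjmx map_mxT trmx_tens. Qed.

Lemma adjmx_ket n (j : 'I_n) : adjmx (@ket R n j) = delta_mx 0 j.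
Proof. by apply/matrixP=> a b; rewrite !mxE conjC_nat andbC. Qed.

Lemma adjmx_cconj m n (A : 'M[C]_(m, n)) : adjmx (cconjmx A) = A^T.
Proof. by apply/matrixP=> i j; rewrite !mxE conjCK. Qed.

Lemma cconjmx_adj m n (A : 'M[C]_(m, n)) : cconjmx (adjmx A) = A^T.
Proof. by apply/matrixP=> i j; rewrite !mxE conjCK. Qed.

Lemma cconjmxK m n (A : 'M[C]_(m, n)) : cconjmx (cconjmx A) = A.
Proof. by apply/matrixP=> i j; rewrite !mxE conjCK. Qed.

Lemma cconjmxM m n p (A : 'M[C]_(m, n)) (B : 'M[C]_(n, p)) :
  cconjmx (A *m B) = cconjmx A *m cconjmx B.
Proof. exact: map_mxM. Qed.

Lemma unitary_trmx n (U : 'M[C]_n) : unitary U -> U^T *m cconjmx U = 1%:M.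
Proof. by case=> UU _; rewrite -[cconjmx U]trmxK -trmx_mul -/(adjmx U) UU trmx1. Qed.

End Adjoint.

Section Projector.
Variable R : realType.
Local Notation C := R[i].

Lemma proj_mulmx n (A : 'M[C]_n) (x : 'cV[C]_n) :
  proj (A *m x) = A *m proj x *m adjmx A.
Proof. by rewrite /proj adjmxM !mulmxA. Qed.

Lemma cconjmx_proj n (x : 'cV[C]_n) : cconjmx (proj x) = proj (cconjmx x).
Proof. by rewrite /proj cconjmxM cconjmx_adj adjmx_cconj. Qed.

Lemma trmx_proj n (x : 'cV[C]_n) : (proj x)^T = proj (cconjmx x).
Proof. by rewrite /proj trmx_mul adjmx_cconj /adjmx trmxK. Qed.

Lemma psd_proj n (w : 'cV[C]_n) : psd (proj w).
Proof.
move=> v; rewrite /proj !mulmxA -(mulmxA _ (adjmx w)).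
have -> : adjmx w *m v = adjmx (adjmx v *m w) by rewrite adjmxM adjmxK.
by rewrite mxE big_ord1 !mxE mul_conjC_ge0.
Qed.

Lemma psdZ n (c : C) (M : 'M[C]_n) : 0 <= c -> psd M -> psd (c *: M).
Proof. by move=> c0 pM v; rewrite -scalemxAr -scalemxAl mxE mulr_ge0. Qed.

Lemma mxtrace_proj n (x : 'cV[C]_n) : \tr (proj x) = (adjmx x *m x) 0 0.
Proof. by rewrite /proj mxtrace_mulC /mxtrace big_ord1. Qed.

Lemma unit_vector_cconj n (x : 'cV[C]_n) :
  unit_vector x -> unit_vector (cconjmx x).
Proof.
rewrite /unit_vector adjmx_cconj -cconjmx_adj -cconjmxM => x1.
by rewrite mxE x1 conjC1.
Qed.

Lemma unit_vector_unitary n (U : 'M[C]_n) (x : 'cV[C]_n) :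
  unitary U -> unit_vector x -> unit_vector (U *m x).
Proof.
by case=> UU _; rewrite /unit_vector adjmxM -mulmxA (mulmxA (adjmx U)) UU mul1mx.
Qed.

Lemma is_state_proj n (x : 'cV[C]_n) : unit_vector x -> is_state (proj x).
Proof. by move=> x1; split; [exact: psd_proj | rewrite mxtrace_proj]. Qed.

End Projector.

Section PartialTrace.
Variable R : realType.
Local Notation C := R[i].

Lemma ptrace1_sum m n I (r : seq I) (F : I -> 'M[C]_(m * n)) :
  ptrace1 (\sum_(i <- r) F i) = \sum_(i <- r) ptrace1 (F i).
Proof.
apply/matrixP=> i j; rewrite mxE summxE.
under eq_bigr do rewrite summxE.
by rewrite exchange_big; apply: eq_bigr => k _; rewrite mxE.
Qed.

Lemma ptrace1Z m n (a : C) (M : 'M[C]_(m * n)) : ptrace1 (a *: M) = a *: ptrace1 M.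
Proof.
by apply/matrixP=> i j; rewrite !mxE mulr_sumr; apply: eq_bigr => k _; rewrite mxE.
Qed.

Lemma ptrace1_tens m n (X : 'M[C]_m) (Y : 'M[C]_n) : ptrace1 (X *t Y) = \tr X *: Y.
Proof.
apply/matrixP=> i j; rewrite !mxE /mxtrace mulr_suml.
by apply: eq_bigr => k _; rewrite tensmxE.
Qed.

Lemma mxtrace_ptrace1 m n (M : 'M[C]_(m * n)) : \tr (ptrace1 M) = \tr M.
Proof.
rewrite /mxtrace; under eq_bigr do rewrite mxE.
rewrite exchange_big pair_big /= [RHS](reindex (@mxtens_index m n)) /=.
  by apply: eq_bigr => -[].
by exists (@mxtens_unindex m n) => x _; [apply: mxtens_indexK | apply: mxtens_unindexK].
Qed.

End PartialTrace.

Section MaxEntangled.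
Variable R : realType.
Local Notation C := R[i].

Lemma mxtrace_mul_delta n (A : 'M[C]_n) (j l : 'I_n) :
  \tr (A *m delta_mx j l) = A l j.
Proof.
rewrite /mxtrace (bigD1 l) //= big1 ?addr0.
  rewrite mxE (bigD1 j) //= big1 ?addr0; first by rewrite !mxE !eqxx mulr1.
  by move=> k /negbTE kj; rewrite !mxE kj mulr0.
by move=> i /negbTE il; rewrite mxE big1 // => k _; rewrite !mxE il andbF mulr0.
Qed.

Lemma ket_tens_mul_adj n (j l : 'I_n) :
  (@ket R n j *t @ket R n j) *m adjmx (@ket R n l *t @ket R n l)
  = delta_mx j l *t delta_mx j l.
Proof. by rewrite adjmx_tens !adjmx_ket tensmx_mul !mul_delta_mx. Qed.

Lemma proj_max_ent (D : nat) : proj (max_ent D) =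
  (D%:R : C)^-1 *: \sum_(j < D) \sum_(l < D) (delta_mx j l *t delta_mx j l).
Proof.
have sqrtD : (sqrtC (D%:R : C))^-1 * Num.conj (sqrtC (D%:R : C))^-1 = (D%:R)^-1.
  by rewrite geC0_conj ?invr_ge0 ?sqrtC_ge0 ?ler0n // -invfM -expr2 sqrtCK.
rewrite /proj /max_ent adjmxZ -scalemxAr -scalemxAl scalerA mulrC sqrtD.
rewrite adjmx_sum mulmx_suml; congr (_ *: _); apply: eq_bigr => j _.
rewrite mulmx_sumr; apply: eq_bigr => l _.
by rewrite ket_tens_mul_adj.
Qed.

Lemma receiver_state_max_ent (D : nat) (A : 'M[C]_D) :
  receiver_state A (proj (max_ent D)) = (D%:R : C)^-1 *: A^T.
Proof.
rewrite /receiver_state proj_max_ent -scalemxAr ptrace1Z; congr (_ *: _).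
rewrite mulmx_sumr ptrace1_sum [RHS]matrix_sum_delta; apply: eq_bigr => j _.
rewrite mulmx_sumr ptrace1_sum; apply: eq_bigr => l _.
by rewrite tensmx_mul mul1mx ptrace1_tens mxtrace_mul_delta mxE.
Qed.

Lemma outcome_prob_max_ent (D : nat) (A : 'M[C]_D) :
  outcome_prob A (proj (max_ent D)) = (D%:R : C)^-1 * \tr A.
Proof.
rewrite /outcome_prob -mxtrace_ptrace1 -/(receiver_state _ _).
by rewrite receiver_state_max_ent mxtraceZ mxtrace_tr.
Qed.

End MaxEntangled.

Section Protocol.
Variables (R : realType) (D K : nat) (eps : R) (U : 'I_K -> 'M[R[i]]_D).
Variable psi : 'cV[R[i]]_D.
Hypotheses (D_gt0 : (0 < D)%N) (K_gt0 : (0 < K)%N) (eps_gt0 : 0 < eps).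
Hypothesis U_unitary : forall k, unitary (U k).
Hypothesis psi_unit : unit_vector psi.

Local Notation C := R[i].
Local Notation weight := ((D%:R / (K%:R * (1 + eps)))%:C : C).

Let onepeps_gt0 : 0 < 1 + eps. Proof. exact: addr_gt0. Qed.
Let onepeps_neq0 : (1 + eps%:C : C) != 0.
Proof. by apply/eqP => /(congr1 (@complex.Re R)) /= /eqP; rewrite gt_eqF. Qed.
Let D_neq0 : (D%:R : C) != 0. Proof. by rewrite pnatr_eq0 -lt0n. Qed.
Let K_neq0 : (K%:R : C) != 0. Proof. by rewrite pnatr_eq0 -lt0n. Qed.

Lemma povm_eltE k : povm_elt eps U psi k = weight *: proj (U k *m cconjmx psi).
Proof. by rewrite /povm_elt cconjmx_proj proj_mulmx. Qed.

Lemma mxtrace_proj_rotated k : \tr (proj (U k *m cconjmx psi)) = 1.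
Proof. by rewrite mxtrace_proj; exact/unit_vector_unitary/unit_vector_cconj. Qed.

Lemma psd_povm_elt k : psd (povm_elt eps U psi k).
Proof.
rewrite povm_eltE; apply/psdZ/psd_proj.
by rewrite ler0c divr_ge0 ?ler0n // mulr_ge0 ?ler0n ?ltW.
Qed.

Lemma povm_failE : povm_fail eps U psi = (D%:R / (1 + eps))%:C *:
  ((((1 + eps) / D%:R)%:C)%:M
   - K%:R^-1 *: \sum_(k < K) (U k *m cconjmx (proj psi) *m adjmx (U k))).
Proof.
rewrite /povm_fail scalerBr scale_scalar_mx scalerA.
under eq_bigr do rewrite povm_eltE.
under [in RHS]eq_bigr do rewrite cconjmx_proj -proj_mulmx.
rewrite -scaler_sumr; congr (_%:M - _ *: _);
  rewrite !(rmorphM, rmorphD, fmorphV, rmorph1, rmorph_nat) /=; field;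
  by rewrite ?D_neq0 ?K_neq0 ?onepeps_neq0.
Qed.

Lemma psd_povm_fail :
  loewner ((K%:R)^-1 *: \sum_(k < K) (U k *m cconjmx (proj psi) *m adjmx (U k)))
          (((1 + eps) / D%:R)%:C)%:M ->
  psd (povm_fail eps U psi).
Proof.
move=> mixing; rewrite povm_failE; apply: psdZ mixing.
by rewrite ler0c divr_ge0 ?ler0n ?ltW.
Qed.

Lemma outcome_prob_povm_elt k :
  outcome_prob (povm_elt eps U psi k) (proj (max_ent D)) = D%:R^-1 * weight.
Proof. by rewrite outcome_prob_max_ent povm_eltE mxtraceZ mxtrace_proj_rotated mulr1. Qed.

Lemma rsp_outputE k : rsp_output eps U psi k = (D%:R^-1 * weight) *: proj psi.
Proof.
rewrite /rsp_output receiver_state_max_ent povm_eltE [(_ *: proj _)^T]linearZ /=.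
rewrite -!scalemxAr -!scalemxAl scalerA; congr (_ *: _).
by rewrite trmx_proj cconjmxM cconjmxK -proj_mulmx mulmxA unitary_trmx // mul1mx.
Qed.

Lemma outcome_prob_povm_fail :
  outcome_prob (povm_fail eps U psi) (proj (max_ent D)) = (eps / (1 + eps))%:C.
Proof.
rewrite outcome_prob_max_ent /povm_fail -scaleN1r mxtraceD mxtraceZ mxtrace1 raddf_sum /=.
under eq_bigr do rewrite povm_eltE mxtraceZ mxtrace_proj_rotated mulr1.
rewrite sumr_const card_ord -mulr_natr.
rewrite !(rmorphM, rmorphD, fmorphV, rmorph1, rmorph_nat) /=; field.
by rewrite ?D_neq0 ?K_neq0 ?onepeps_neq0.
Qed.

End Protocol.

Lemma ler_div1D (R : realFieldType) (e : R) : 0 <= e -> e / (1 + e) <= e.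
Proof. by move=> e0; rewrite ler_pdivrMr; nra. Qed.

Lemma log2_le_mul_bound (R : realType) (a d l x : R) :
  0 < a -> 0 < d -> 1 <= x -> x <= a ^+ 2 * d * l ->
  log2 x <= log2 d + 2 * log2 a + log2 l.
Proof.
move=> a0 d0 x1 xle.
have ad0 : 0 < a ^+ 2 * d by rewrite mulr_gt0 ?exprn_gt0.
have l0 : 0 < l.
  by rewrite -(pmulr_rgt0 _ ad0); apply: lt_le_trans xle; lra.
have ln_le : ln x <= ln a *+ 2 + ln d + ln l.
  rewrite -lnXn // -!lnM ?posrE ?exprn_gt0 ?mulr_gt0 //.
  by rewrite ler_ln ?posrE ?mulr_gt0 //; lra.
have ln2 : 0 < ln (2 : R) by rewrite ln_gt0 // ltr1n.
rewrite /log2 mulrA -!mulrDl ler_pM2r ?invr_gt0 //; lra.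
Qed.

Theorem theorem5 (R : realType) (D K : nat) (eps : R) (U : 'I_K -> 'M[R[i]]_D) :
  (0 < D)%N -> (0 < K)%N -> 0 < eps ->
  (K%:R <= (10 / eps) ^+ 2 * D%:R * log2 (20 * D%:R / eps)) ->
  (forall k, unitary (U k)) ->
  (forall phi : 'M[R[i]]_D, is_state phi ->
     loewner (((1 - eps) / D%:R)%:C)%:M
             ((K%:R)^-1 *: \sum_(k < K) (U k *m phi *m adjmx (U k)))
     /\ loewner ((K%:R)^-1 *: \sum_(k < K) (U k *m phi *m adjmx (U k)))
                (((1 + eps) / D%:R)%:C)%:M) ->
  forall psi : 'cV[R[i]]_D, unit_vector psi ->
    (* the A_k and A_failure form a POVM *)
    (forall k, psd (povm_elt eps U psi k)) /\ psd (povm_fail eps U psi) /\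
    (* on every non-failure outcome the Receiver holds exactly psi *)
    (forall k, outcome_prob (povm_elt eps U psi k) (proj (max_ent D)) != 0 ->
       (outcome_prob (povm_elt eps U psi k) (proj (max_ent D)))^-1 *:
         rsp_output eps U psi k = proj psi) /\
    (* failure probability is exactly eps/(1+eps) <= eps *)
    outcome_prob (povm_fail eps U psi) (proj (max_ent D)) = (eps / (1 + eps))%:C /\
    eps / (1 + eps) <= eps /\
    (* resources: log K <= log D + 2 log(10/eps) + log log(20D/eps) cbits
       (for the outcome k), and log D ebits (Schmidt rank D of Phi_D) *)
    log2 K%:R <= log2 D%:R + 2 * log2 (10 / eps) + log2 (log2 (20 * D%:R / eps)).
Proof.
move=> D0 K0 eps0 K_le U_unitary mixing psi psi_unit.
have mixing_psi := (mixing _ (is_state_proj (unit_vector_cconj psi_unit))).2.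
rewrite -cconjmx_proj in mixing_psi.
split; first exact: psd_povm_elt.
split; first exact: psd_povm_fail.
split.
  move=> k p_neq0; rewrite rsp_outputE // -(outcome_prob_povm_elt eps U_unitary psi_unit k).
  by rewrite scalerA mulVf // scale1r.
split; first exact: outcome_prob_povm_fail.
split; first exact/ler_div1D/ltW.
apply: log2_le_mul_bound; rewrite ?divr_gt0 ?ltr0n ?ler1n //.
Qed.
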